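(* For every term $t$ over $\Sigma_{md,\bot}(X)$ there exist terms $r_1,r_2$ over $\Sigma_f(X)$ such that $t=r_1\cdot r_2^{-1}$ is derivable in equational logic from $\mathsf{Md}_\bot$ and $\mathsf{VAR}(t)=\mathsf{VAR}(r_1)\cup\mathsf{VAR}(r_2)$.
   Context: $\Sigma_f$ is the signature with one sort, constants $0,1$, binary operations $+,\cdot$ and unary operation $-$; $\Sigma_{md,\bot}$ extends it with a constant $\bot$ and a unary operation $(\,\cdot\,)^{-1}$. For a signature $\Sigma$, $\Sigma(X)$ denotes terms over $\Sigma$ with variables from the set $X$, and $\mathsf{VAR}(t)$ is the set of variables occurring in $t$. $\mathsf{Md}_\bot$ is the set of equations (variables universally quantified): $(x+y)+z=x+(y+z)$; $x+y=y+x$; $x+0=x$; $x+(-x)=0\cdot x$; $(x\cdot y)\cdot z=x\cdot(y\cdot z)$; $x\cdot y=y\cdot x$; $1\cdot x=x$; $x\cdot(y+z)=x\cdot y+x\cdot z$; $-(-x)=x$; $0\cdot(x\cdot x)=0\cdot x$; $(x^{-1})^{-1}=x+0\cdot x^{-1}$; $x\cdot x^{-1}=1+0\cdot x^{-1}$; $(x\cdot y)^{-1}=x^{-1}\cdot y^{-1}$; $1^{-1}=1$; $0^{-1}=\bot$; $x+\bot=\bot$; $x\cdot\bot=\bot$. *)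

Set Implicit Arguments.

Inductive term (X : Type) : Type :=
| Var : X -> term X
| Zero : term X
| One : term X
| Bot : term X
| Add : term X -> term X -> term X
| Mul : term X -> term X -> term X
| Opp : term X -> term X
| Inv : term X -> term X.

Arguments Zero {X}.
Arguments One {X}.
Arguments Bot {X}.

Fixpoint is_field_term (X : Type) (t : term X) : Prop :=
  match t with
  | Var _ => True
  | Zero | One => True
  | Bot => False
  | Add a b => is_field_term a /\ is_field_term b
  | Mul a b => is_field_term a /\ is_field_term b
  | Opp a => is_field_term a
  | Inv _ => False
  end.

Fixpoint occurs (X : Type) (x : X) (t : term X) : Prop :=
  match t with
  | Var y => x = y
  | Zero | One | Bot => False
  | Add a b | Mul a b => occurs x a \/ occurs x b
  | Opp a | Inv a => occurs x a
  end.

(* Derivability in equational logic from Md_bot: the least congruence on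
   term X containing all substitution instances of the axioms of Md_bot
   (axioms are given as schemas, the metavariables ranging over all terms). *)
Inductive md_eq (X : Type) : term X -> term X -> Prop :=
| md_refl t : md_eq t t
| md_sym s t : md_eq s t -> md_eq t s
| md_trans s t u : md_eq s t -> md_eq t u -> md_eq s u
| md_cong_add a a' b b' : md_eq a a' -> md_eq b b' -> md_eq (Add a b) (Add a' b')
| md_cong_mul a a' b b' : md_eq a a' -> md_eq b b' -> md_eq (Mul a b) (Mul a' b')
| md_cong_opp a a' : md_eq a a' -> md_eq (Opp a) (Opp a')
| md_cong_inv a a' : md_eq a a' -> md_eq (Inv a) (Inv a')
| ax_addA x y z : md_eq (Add (Add x y) z) (Add x (Add y z))
| ax_addC x y : md_eq (Add x y) (Add y x)
| ax_add0 x : md_eq (Add x Zero) x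
| ax_addN x : md_eq (Add x (Opp x)) (Mul Zero x)
| ax_mulA x y z : md_eq (Mul (Mul x y) z) (Mul x (Mul y z))
| ax_mulC x y : md_eq (Mul x y) (Mul y x)
| ax_mul1 x : md_eq (Mul One x) x
| ax_mulDr x y z : md_eq (Mul x (Add y z)) (Add (Mul x y) (Mul x z))
| ax_oppK x : md_eq (Opp (Opp x)) x
| ax_zero_sq x : md_eq (Mul Zero (Mul x x)) (Mul Zero x)
| ax_invK x : md_eq (Inv (Inv x)) (Add x (Mul Zero (Inv x)))
| ax_mulV x : md_eq (Mul x (Inv x)) (Add One (Mul Zero (Inv x)))
| ax_invM x y : md_eq (Inv (Mul x y)) (Mul (Inv x) (Inv y))
| ax_inv1 : md_eq (Inv One) One
| ax_inv0 : md_eq (Inv Zero) Bot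
| ax_addBot x : md_eq (Add x Bot) Bot
| ax_mulBot x : md_eq (Mul x Bot) Bot.

(* Every term is provably a fraction r1 / r2 of inverse-free terms, by
   structural induction using the familiar rules for adding, multiplying,
   negating and inverting fractions.  In Md_bot these rules hold only up to
   "definedness markers" 0 * x, and the whole point is that such markers can
   be absorbed: 0 * (x * y) = 0 * x + 0 * y, and x * y + 0 * x = x * y.  The
   marker 0 * b^-1 created by b * b^-1 = 1 + 0 * b^-1 is therefore swallowed
   by any product still containing b^-1.  Bot is 1 / 0, and the inverse of
   a / b is taken as (b * b) / (a * b) rather than b / a, so that b^-1 stays
   in the result and absorbs the marker left by inv (inv b). *)

From Stdlib Require Import Setoid Morphisms.

Local Infix "≡" := md_eq (at level 70).
Local Infix "⊕" := Add (at level 50, left associativity).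
Local Infix "⊗" := Mul (at level 40, left associativity).

#[local] Instance md_eq_Equivalence {X} : Equivalence (@md_eq X).
Proof. split; [intro; apply md_refl | intros ? ?; apply md_sym | intros ? ? ?; apply md_trans]. Qed.
#[local] Instance Add_Proper {X} : Proper (@md_eq X ==> @md_eq X ==> @md_eq X) (@Add X).
Proof. intros ? ? ? ? ? ?; apply md_cong_add; assumption. Qed.
#[local] Instance Mul_Proper {X} : Proper (@md_eq X ==> @md_eq X ==> @md_eq X) (@Mul X).
Proof. intros ? ? ? ? ? ?; apply md_cong_mul; assumption. Qed.
#[local] Instance Opp_Proper {X} : Proper (@md_eq X ==> @md_eq X) (@Opp X).
Proof. intros ? ? ?; apply md_cong_opp; assumption. Qed.
#[local] Instance Inv_Proper {X} : Proper (@md_eq X ==> @md_eq X) (@Inv X).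
Proof. intros ? ? ?; apply md_cong_inv; assumption. Qed.

Section Md_bot_calculus.

Context {X : Type}.
Implicit Types a b c d u x y z : term X.

Lemma mulr1 x : x ⊗ One ≡ x.
Proof. rewrite ax_mulC; apply ax_mul1. Qed.

Lemma mulrDl x y z : (x ⊕ y) ⊗ z ≡ x ⊗ z ⊕ y ⊗ z.
Proof. rewrite (ax_mulC (x ⊕ y) z), ax_mulDr, (ax_mulC z x), (ax_mulC z y). reflexivity. Qed.

Lemma addrCA x y z : x ⊕ (y ⊕ z) ≡ y ⊕ (x ⊕ z).
Proof. rewrite <- ax_addA, (ax_addC x y), ax_addA. reflexivity. Qed.

Lemma mulrCA x y z : x ⊗ (y ⊗ z) ≡ y ⊗ (x ⊗ z).
Proof. rewrite <- ax_mulA, (ax_mulC x y), ax_mulA. reflexivity. Qed.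

Lemma addrACA a b c d : a ⊕ b ⊕ (c ⊕ d) ≡ a ⊕ c ⊕ (b ⊕ d).
Proof. rewrite !ax_addA, (addrCA b c d). reflexivity. Qed.

Lemma mulrACA a b c d : (a ⊗ b) ⊗ (c ⊗ d) ≡ (a ⊗ c) ⊗ (b ⊗ d).
Proof. rewrite !ax_mulA, (mulrCA b c d). reflexivity. Qed.

Lemma addr_mul0 x : x ⊕ Zero ⊗ x ≡ x.
Proof. rewrite <- (ax_mul1 x) at 1; rewrite <- mulrDl, ax_add0, ax_mul1. reflexivity. Qed.

Lemma mul0_idem x : Zero ⊗ x ⊕ Zero ⊗ x ≡ Zero ⊗ x.
Proof. rewrite <- mulrDl, ax_add0. reflexivity. Qed.

Lemma mul0N x : Zero ⊗ Opp x ≡ Zero ⊗ x.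
Proof. rewrite <- (ax_addN (Opp x)), <- (ax_addN x), ax_oppK. apply ax_addC. Qed.

Lemma mul00 : Zero ⊗ Zero ≡ (Zero : term X).
Proof.
  assert (subr11 : One ⊕ Opp One ≡ (Zero : term X)).
  { rewrite ax_addN, mulr1. reflexivity. }
  rewrite <- subr11 at 2.
  rewrite ax_mulDr, mul0N, mulr1, ax_add0. reflexivity.
Qed.

Lemma mul0MM x y : (Zero ⊗ x) ⊗ (Zero ⊗ y) ≡ Zero ⊗ (x ⊗ y).
Proof. rewrite ax_mulA, (mulrCA x Zero y), <- (ax_mulA Zero Zero), mul00. reflexivity. Qed.

Lemma mul0_addr1 y : Zero ⊗ (y ⊕ One) ≡ Zero ⊗ y.
Proof. rewrite ax_mulDr, mulr1, ax_add0. reflexivity. Qed.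

(* Expand (0 x)(y + 1) in two ways: distributively, and as (0 x)(0 (y + 1)). *)
Lemma mul0M_absorbl x y : Zero ⊗ (x ⊗ y) ⊕ Zero ⊗ x ≡ Zero ⊗ (x ⊗ y).
Proof.
  transitivity ((Zero ⊗ x) ⊗ (y ⊕ One)).
  { rewrite ax_mulDr, mulr1, ax_mulA. reflexivity. }
  transitivity ((Zero ⊗ x) ⊗ (Zero ⊗ (y ⊕ One))).
  { rewrite mul0MM, ax_mulA. reflexivity. }
  rewrite mul0_addr1, mul0MM. reflexivity.
Qed.

(* Instance of 0 (x + y)^2 = 0 (x + y) in which the cross terms collapse. *)
Lemma mul0M x y : Zero ⊗ (x ⊗ y) ≡ Zero ⊗ x ⊕ Zero ⊗ y.
Proof.
  pose proof (ax_zero_sq (x ⊕ y)) as sq.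
  rewrite mulrDl, !ax_mulDr, (ax_mulC y x), !ax_zero_sq in sq.
  rewrite ax_addA, <- (ax_addA (Zero ⊗ (x ⊗ y))), mul0_idem in sq.
  assert (absorb : Zero ⊗ (x ⊗ y) ⊕ Zero ⊗ x ⊕ Zero ⊗ y ≡ Zero ⊗ (x ⊗ y)).
  { rewrite mul0M_absorbl, (ax_mulC x y), mul0M_absorbl. reflexivity. }
  rewrite <- absorb, (ax_addC (Zero ⊗ (x ⊗ y)) (Zero ⊗ x)), ax_addA. exact sq.
Qed.

Lemma addr_mul0Ml x y : x ⊗ y ⊕ Zero ⊗ x ≡ x ⊗ y.
Proof.
  rewrite <- (addr_mul0 (x ⊗ y)) at 1.
  rewrite ax_addA, mul0M_absorbl, addr_mul0. reflexivity.
Qed.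

Lemma addr_mul0Mr x y : x ⊗ y ⊕ Zero ⊗ y ≡ x ⊗ y.
Proof. rewrite (ax_mulC x y); apply addr_mul0Ml. Qed.

Lemma addr_mul0M x y : x ⊕ Zero ⊗ (x ⊗ y) ≡ x ⊕ Zero ⊗ y.
Proof. rewrite mul0M, <- ax_addA, addr_mul0. reflexivity. Qed.

Lemma mulr_divff u d : u ⊗ (d ⊗ Inv d) ≡ u ⊕ Zero ⊗ Inv d.
Proof. rewrite ax_mulV, ax_mulDr, mulr1, mulrCA, addr_mul0M. reflexivity. Qed.

Lemma oppMl x y : Opp (x ⊗ y) ≡ Opp x ⊗ y.
Proof.
  assert (sum0 : Opp x ⊗ y ⊕ x ⊗ y ≡ Zero ⊗ (x ⊗ y)).
  { rewrite <- mulrDl, ax_addC, ax_addN, ax_mulA. reflexivity. }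
  assert (mul0_oppx : Zero ⊗ (Opp x ⊗ y) ≡ Zero ⊗ (x ⊗ y)).
  { rewrite <- ax_mulA, mul0N, ax_mulA. reflexivity. }
  rewrite <- (addr_mul0 (Opp x ⊗ y)), mul0_oppx, <- ax_addN, <- ax_addA, sum0.
  rewrite ax_addC, <- (mul0N (x ⊗ y)), addr_mul0. reflexivity.
Qed.

Lemma mul_frac a b c d : (a ⊗ Inv b) ⊗ (c ⊗ Inv d) ≡ (a ⊗ c) ⊗ Inv (b ⊗ d).
Proof. rewrite ax_invM, !ax_mulA, (mulrCA (Inv b) c (Inv d)). reflexivity. Qed.

Lemma add_frac a b c d :
  a ⊗ Inv b ⊕ c ⊗ Inv d ≡ (a ⊗ d ⊕ c ⊗ b) ⊗ Inv (b ⊗ d).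
Proof.
  rewrite ax_invM, mulrDl, mulrACA, (ax_mulC (Inv b) (Inv d)), (mulrACA c b).
  rewrite !mulr_divff, (ax_addC (c ⊗ Inv d) (Zero ⊗ Inv b)), addrACA.
  rewrite (ax_addC (Zero ⊗ Inv d) (c ⊗ Inv d)), !addr_mul0Mr. reflexivity.
Qed.

Lemma opp_frac a b : Opp (a ⊗ Inv b) ≡ Opp a ⊗ Inv b.
Proof. apply oppMl. Qed.

Lemma inv_frac a b : Inv (a ⊗ Inv b) ≡ (b ⊗ b) ⊗ Inv (a ⊗ b).
Proof.
  assert (inv_frac_marked : Inv (a ⊗ Inv b) ≡ Inv a ⊗ b ⊕ Zero ⊗ Inv b).
  { rewrite ax_invM, ax_invK, ax_mulDr, mulrCA, mul0M, <- ax_addA, addr_mul0Ml.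
    reflexivity. }
  rewrite inv_frac_marked, ax_invM, ax_mulA, (mulrCA b (Inv a) (Inv b)), mulr_divff.
  rewrite ax_mulDr, (mulrCA b Zero), mul0M, <- ax_addA, addr_mul0Ml, (ax_mulC b (Inv a)).
  reflexivity.
Qed.

Lemma frac1 a : a ≡ a ⊗ Inv One.
Proof. rewrite ax_inv1, mulr1. reflexivity. Qed.

Lemma bot_frac : Bot ≡ One ⊗ Inv (Zero : term X).
Proof. rewrite ax_inv0, ax_mul1. reflexivity. Qed.

End Md_bot_calculus.

Definition is_fraction_of {X} (t r1 r2 : term X) : Prop :=
  is_field_term r1 /\ is_field_term r2 /\ t ≡ r1 ⊗ Inv r2 /\
  (forall x : X, occurs x t <-> (occurs x r1 \/ occurs x r2)).

Section Fractions.

Context {X : Type}.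
Implicit Types t a b c d : term X.

Lemma is_fraction_of_const t : is_field_term t -> (forall x, ~ occurs x t) ->
  is_fraction_of t t One.
Proof.
  intros Ht V; split; [exact Ht | split; [exact I | split; [apply frac1 |]]].
  intro x; specialize (V x); simpl; tauto.
Qed.

Lemma is_fraction_of_var (y : X) : is_fraction_of (Var y) (Var y) One.
Proof.
  split; [exact I | split; [exact I | split; [apply frac1 |]]].
  intro x; simpl; tauto.
Qed.

Lemma is_fraction_of_bot : is_fraction_of (@Bot X) One Zero.
Proof.
  split; [exact I | split; [exact I | split; [apply bot_frac |]]].
  intro x; simpl; tauto.
Qed.

Lemma is_fraction_of_add {t1 t2 a b c d} :
  is_fraction_of t1 a b -> is_fraction_of t2 c d ->
  is_fraction_of (t1 ⊕ t2) (a ⊗ d ⊕ c ⊗ b) (b ⊗ d).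
Proof.
  intros (Ha & Hb & E1 & V1) (Hc & Hd & E2 & V2).
  split; [simpl; tauto | split; [simpl; tauto | split]].
  - rewrite E1, E2; apply add_frac.
  - intro x; specialize (V1 x); specialize (V2 x); simpl; tauto.
Qed.

Lemma is_fraction_of_mul {t1 t2 a b c d} :
  is_fraction_of t1 a b -> is_fraction_of t2 c d ->
  is_fraction_of (t1 ⊗ t2) (a ⊗ c) (b ⊗ d).
Proof.
  intros (Ha & Hb & E1 & V1) (Hc & Hd & E2 & V2).
  split; [simpl; tauto | split; [simpl; tauto | split]].
  - rewrite E1, E2; apply mul_frac.
  - intro x; specialize (V1 x); specialize (V2 x); simpl; tauto.
Qed.

Lemma is_fraction_of_opp {t a b} :
  is_fraction_of t a b -> is_fraction_of (Opp t) (Opp a) b.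
Proof.
  intros (Ha & Hb & E & V).
  split; [exact Ha | split; [exact Hb | split]].
  - rewrite E; apply opp_frac.
  - intro x; specialize (V x); simpl; tauto.
Qed.

Lemma is_fraction_of_inv {t a b} :
  is_fraction_of t a b -> is_fraction_of (Inv t) (b ⊗ b) (a ⊗ b).
Proof.
  intros (Ha & Hb & E & V).
  split; [simpl; tauto | split; [simpl; tauto | split]].
  - rewrite E; apply inv_frac.
  - intro x; specialize (V x); simpl; tauto.
Qed.

End Fractions.

Theorem proposition2p3 (X : Type) (t : term X) :
  exists r1 r2 : term X,
    is_field_term r1 /\ is_field_term r2 /\
    md_eq t (Mul r1 (Inv r2)) /\
    (forall x : X, occurs x t <-> (occurs x r1 \/ occurs x r2)).
Proof.
  induction t as [y | | | | t1 IH1 t2 IH2 | t1 IH1 t2 IH2 | t1 IH1 | t1 IH1];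
    try destruct IH1 as (a & b & IH1); try destruct IH2 as (c & d & IH2);
    eexists _, _.
  - apply is_fraction_of_var.
  - apply is_fraction_of_const; simpl; tauto.
  - apply is_fraction_of_const; simpl; tauto.
  - apply is_fraction_of_bot.
  - exact (is_fraction_of_add IH1 IH2).
  - exact (is_fraction_of_mul IH1 IH2).
  - exact (is_fraction_of_opp IH1).
  - exact (is_fraction_of_inv IH1).
Qed.
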